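(* Let $\gamma>0$, $\mu\ge0$, and $$q_\mu(r,t)=\int_0^\infty p(r,s)\,p_\mu(s,t)\,ds,\qquad p(r,s)=\frac{2r^{\gamma-1}e^{-r^2/(2s)}}{(2s)^{\gamma/2}\Gamma(\gamma/2)},\quad p_\mu(s,t)=\frac{t\,e^{-(t-\mu s)^2/(2s)}}{\sqrt{2\pi s^3}},$$ which is the density of $R^\gamma(T^\mu_t)$ ($R^\gamma$ a $\gamma$-dimensional Bessel process from $0$, $T^\mu_t$ the first passage time to level $t$ of an independent Brownian motion with drift $\mu$). Then $$\left(2\mu\frac{\partial}{\partial t}-\frac{\partial^2}{\partial t^2}\right)q_\mu=\left(\frac{\partial^2}{\partial r^2}-(\gamma-1)\frac{\partial}{\partial r}\frac1r\right)q_\mu,\qquad r,t>0.$$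
   Context: The operator $\frac{\partial}{\partial r}\frac1r$ means $f\mapsto\frac{\partial}{\partial r}\left(\frac fr\right)$. *)

From Stdlib Require Import Reals.
From Coquelicot Require Import Coquelicot.
Open Scope R_scope.

Definition Gamma_fn (x : R) : R :=
  RInt_gen (fun s => Rpower s (x - 1) * exp (- s))
           (at_right 0) (Rbar_locally p_infty).

Definition p_bessel (g r s : R) : R :=
  2 * Rpower r (g - 1) * exp (- (r ^ 2) / (2 * s))
    / (Rpower (2 * s) (g / 2) * Gamma_fn (g / 2)).

Definition p_fpt (mu s t : R) : R :=
  t * exp (- ((t - mu * s) ^ 2) / (2 * s)) / sqrt (2 * PI * s ^ 3).

Definition q_mu (g mu r t : R) : R :=
  RInt_gen (fun s => p_bessel g r s * p_fpt mu s t)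
           (at_right 0) (Rbar_locally p_infty).

From Stdlib Require Import Reals Lra Psatz.
From Coquelicot Require Import Coquelicot.
Open Scope R_scope.

(* After substituting the two densities the integrand is
   c r^(g-1) t e^(mu t) s^(-m) e^(-a/s - b s)  with  m = (g+3)/2, a = (r^2+t^2)/2,
   b = mu^2/2, so q_mu = c r^(g-1) t e^(mu t) H_m(a) where
   H_m(a) = int_0^oo s^(-m) e^(-a/s - b s) ds.  Differentiating under the integral
   gives dH_m/da = - H_(m+1), and integrating the s-derivative of the integrand,
   which vanishes at 0 and +oo, gives the recurrence a H_(m+2) = m H_(m+1) + b H_m.
   Both sides of the equation are then combinations of H_m, H_(m+1), H_(m+2) with
   explicit coefficients, and the recurrence identifies them. *)

Lemma exp_le_mono x y : x <= y -> exp x <= exp y.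
Proof. intros [Hlt | ->]; [left; now apply exp_increasing | right; reflexivity]. Qed.

Lemma ln_le_sub_1 y : 0 < y -> ln y <= y - 1.
Proof. intros Hy. pose proof (exp_ineq1_le (ln y)) as Hexp. rewrite exp_ln in Hexp by exact Hy. lra. Qed.

Lemma locally_gt_0 y : 0 < y -> locally y (fun z => 0 < z).
Proof. exact (open_gt 0 y). Qed.

Lemma at_right_0_lt A : 0 < A -> at_right 0 (fun x => 0 < x < A).
Proof.
  intros HA. unfold at_right, within. apply (filter_imp (fun x => x < A)); [|exact (open_lt A 0 HA)].
  intros x HxA Hx. lra.
Qed.

Lemma filter_prod_0_infty (P : R * R -> Prop) :
  (forall a b, 0 < a <= b -> P (a, b)) ->
  filter_prod (at_right 0) (Rbar_locally p_infty) P.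
Proof.
  intros HP. apply Filter_prod with (fun x => 0 < x < 1) (fun x => 1 < x).
  - apply at_right_0_lt; lra.
  - exists 1. tauto.
  - intros a b Ha Hb. apply HP. lra.
Qed.

Lemma is_derive_2 (f f' : R -> R) x l :
  locally x (fun y => is_derive f y (f' y)) -> is_derive f' x l ->
  ex_derive (Derive f) x /\ Derive_n f 2 x = l.
Proof.
  intros Hf Hf'.
  assert (Hloc : locally x (fun y => f' y = Derive f y)).
  { apply (filter_imp _ _ (fun y Hy => eq_sym (is_derive_unique f y (f' y) Hy)) Hf). }
  split.
  - exists l. exact (is_derive_ext_loc _ _ x l Hloc Hf').
  - change (Derive (Derive f) x = l).
    rewrite <- (Derive_ext_loc _ _ x Hloc). now apply is_derive_unique.
Qed.

Section Improper_0_infty.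

Variable f : R -> R.
Hypothesis f_cont : forall x, 0 < x -> continuous f x.

Lemma ex_RInt_pos a b : 0 < a -> 0 < b -> ex_RInt f a b.
Proof.
  intros Ha Hb. apply (ex_RInt_continuous (V := R_CompleteNormedModule)).
  intros x Hx. apply f_cont. pose proof (Rmin_glb_lt a b 0 Ha Hb). lra.
Qed.

Lemma Rabs_RInt_swap a b : 0 < a -> 0 < b -> Rabs (RInt f b a) = Rabs (RInt f a b).
Proof.
  intros Ha Hb. rewrite <- opp_RInt_swap by now apply ex_RInt_pos.
  unfold opp; simpl. apply Rabs_Ropp.
Qed.

Lemma RInt_sub_RInt a a' b b' : 0 < a -> 0 < a' -> 0 < b -> 0 < b' ->
  RInt f a' b' - RInt f a b = RInt f a' a + RInt f b b'.
Proof.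
  intros Ha Ha' Hb Hb'.
  rewrite <- (RInt_Chasles f a' a b'), <- (RInt_Chasles f a b b') by now apply ex_RInt_pos.
  unfold plus; simpl. ring.
Qed.

Lemma Rabs_RInt_le_near_0 M a a' :
  (forall x, 0 < x <= 1 -> Rabs (f x) <= M) -> 0 < a < 1 -> 0 < a' < 1 ->
  Rabs (RInt f a' a) <= Rabs (a - a') * M.
Proof.
  intros HM Ha Ha'. apply (norm_RInt_le_const_abs (V := R_NormedModule) f a' a).
  - intros x Hx. apply HM.
    pose proof (Rmin_glb_lt a' a 0 ltac:(lra) ltac:(lra)).
    pose proof (Rmax_lub_lt a' a 1 ltac:(lra) ltac:(lra)). lra.
  - apply (RInt_correct (V := R_CompleteNormedModule)), ex_RInt_pos; lra.
Qed.

Lemma ex_RInt_gen_0_infty M :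
  (forall x, 0 < x <= 1 -> Rabs (f x) <= M) ->
  (forall eps, 0 < eps -> exists B, 0 < B /\
     forall b b', B <= b <= b' -> Rabs (RInt f b b') <= eps) ->
  ex_RInt_gen f (at_right 0) (Rbar_locally p_infty).
Proof.
  intros HM Htail.
  assert (HM0 : 0 <= M) by (pose proof (HM 1 ltac:(lra)); pose proof (Rabs_pos (f 1)); lra).
  destruct (proj1 (filterlim_locally_cauchy
     (F := filter_prod (at_right 0) (Rbar_locally p_infty))
     (fun ab => RInt f (fst ab) (snd ab)))) as [l Hl].
  - intros [eps Heps].
    destruct (Htail (eps / 3) ltac:(lra)) as [B [HB HBt]].
    set (A := Rmin 1 (eps / (3 * (M + 1)))).
    assert (HA : 0 < A) by (apply Rmin_pos; [lra | apply Rdiv_lt_0_compat; lra]).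
    assert (HA1 : A <= 1) by apply Rmin_l.
    assert (HAM : A * M <= eps / 3).
    { assert (A * (M + 1) <= eps / 3).
      { apply Rle_trans with (eps / (3 * (M + 1)) * (M + 1)).
        - apply Rmult_le_compat_r; [lra | apply Rmin_r].
        - right. field. lra. }
      nra. }
    exists (fun ab => 0 < fst ab < A /\ B < snd ab). split.
    + apply Filter_prod with (fun x => 0 < x < A) (fun x => B < x).
      * now apply at_right_0_lt.
      * exists B. tauto.
      * simpl. tauto.
    + intros [a b] [a' b'] [Ha Hb] [Ha' Hb']; simpl in *.
      change (Rabs (RInt f a' b' - RInt f a b) < eps).
      rewrite RInt_sub_RInt by lra.
      assert (Htl : Rabs (RInt f b b') <= eps / 3).
      { destruct (Rle_dec b b'); [apply HBt; lra|].
        rewrite <- Rabs_RInt_swap by lra. apply HBt; lra. }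
      pose proof (Rabs_RInt_le_near_0 M a a' HM ltac:(lra) ltac:(lra)).
      assert (Rabs (a - a') <= A) by (apply Rabs_le; lra).
      pose proof (Rabs_triang (RInt f a' a) (RInt f b b')).
      nra.
  - exists l. apply filterlimi_lim_ext_loc with (f := fun ab => RInt f (fst ab) (snd ab)).
    + apply filter_prod_0_infty. intros a b Hab; simpl.
      apply (RInt_correct (V := R_CompleteNormedModule)), ex_RInt_pos; lra.
    + exact Hl.
Qed.

End Improper_0_infty.

(* s^(-m) e^(-a/s - b s), written through ln so that auto_derive handles it. *)
Definition gig_kernel (m a b s : R) : R := exp (- m * ln s - a / s - b * s).

Definition gig_integral (m a b : R) : R :=
  RInt_gen (gig_kernel m a b) (at_right 0) (Rbar_locally p_infty).

Lemma gig_kernel_pos m a b s : 0 < gig_kernel m a b s.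
Proof. apply exp_pos. Qed.

Lemma gig_kernel_succ m a b s : 0 < s -> gig_kernel (m + 1) a b s = gig_kernel m a b s / s.
Proof.
  intros Hs. unfold gig_kernel.
  assert (Hmul : exp (- (m + 1) * ln s - a / s - b * s) * exp (ln s)
                 = exp (- m * ln s - a / s - b * s)) by (rewrite <- exp_plus; f_equal; ring).
  rewrite exp_ln in Hmul by exact Hs. rewrite <- Hmul. field. lra.
Qed.

Lemma is_derive_gig_kernel m a b s : 0 < s ->
  is_derive (gig_kernel m a b) s (gig_kernel m a b s * (- m / s + a / s ^ 2 - b)).
Proof.
  intros Hs. unfold gig_kernel. auto_derive; [lra|].
  unfold Rminus, Rdiv. field_simplify; [|lra..]. reflexivity.
Qed.

Lemma continuous_gig_kernel m a b s : 0 < s -> continuous (gig_kernel m a b) s.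
Proof.
  intros Hs. apply (ex_derive_continuous (K := R_AbsRing) (V := R_NormedModule)).
  eexists. now apply is_derive_gig_kernel.
Qed.

Lemma gig_kernel_le m a b s : 0 < m -> 0 < a -> 0 <= b -> 0 < s ->
  gig_kernel m a b s <= exp (m * ln (m / a) - m).
Proof.
  intros Hm Ha Hb Hs. apply exp_le_mono.
  (* ln y <= y - 1 at y = a / (m s) *)
  pose proof (ln_le_sub_1 (a / (m * s)) ltac:(apply Rdiv_lt_0_compat; nra)) as Hln.
  rewrite ln_div, ln_mult in Hln by nra. rewrite ln_div by lra.
  assert (m * (a / (m * s) - 1) = a / s - m) by (field; lra).
  nra.
Qed.

Lemma gig_kernel_le_power m a b s : 0 <= a -> 0 <= b -> 0 < s ->
  gig_kernel m a b s <= exp (- m * ln s).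
Proof.
  intros Ha Hb Hs. apply exp_le_mono.
  assert (0 <= a / s) by (apply Rdiv_le_0_compat; lra).
  nra.
Qed.

Lemma is_RInt_power m b b' : m <> 1 -> 0 < b -> b <= b' ->
  is_RInt (fun s => exp (- m * ln s)) b b'
    ((exp ((1 - m) * ln b') - exp ((1 - m) * ln b)) / (1 - m)).
Proof.
  intros Hm Hb Hbb.
  replace ((exp ((1 - m) * ln b') - exp ((1 - m) * ln b)) / (1 - m))
    with (exp ((1 - m) * ln b') / (1 - m) - exp ((1 - m) * ln b) / (1 - m))
    by (field; lra).
  apply (is_RInt_derive (V := R_CompleteNormedModule) (fun s => exp ((1 - m) * ln s) / (1 - m)));
    intros x Hx; rewrite Rmin_left, Rmax_right in Hx by lra.
  - auto_derive; [lra|].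
    replace ((1 - m) * ln x) with (- m * ln x + ln x) by ring.
    rewrite exp_plus, exp_ln by lra. field. lra.
  - apply (ex_derive_continuous (K := R_AbsRing) (V := R_NormedModule)).
    auto_derive. lra.
Qed.

Lemma ex_RInt_gen_gig_kernel m a b : 1 < m -> 0 < a -> 0 <= b ->
  ex_RInt_gen (gig_kernel m a b) (at_right 0) (Rbar_locally p_infty).
Proof.
  intros Hm Ha Hb. apply ex_RInt_gen_0_infty with (M := exp (m * ln (m / a) - m)).
  - intros. now apply continuous_gig_kernel.
  - intros x Hx. rewrite Rabs_pos_eq by (left; apply gig_kernel_pos).
    apply gig_kernel_le; lra.
  - intros eps Heps.
    (* B^(1-m) = eps (m - 1) *)
    set (B := exp (ln (eps * (m - 1)) / (1 - m))).
    assert (HB : 0 < B) by apply exp_pos.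
    exists B. split; [exact HB|].
    intros u u' [HBu Huu].
    assert (Hu : 0 < u) by lra.
    eapply Rle_trans.
    { apply (norm_RInt_le (V := R_NormedModule) (gig_kernel m a b) (fun s => exp (- m * ln s)) u u' _ _ Huu).
      - intros x Hx. rewrite (Rabs_pos_eq _ (Rlt_le _ _ (gig_kernel_pos _ _ _ _))).
        apply gig_kernel_le_power; lra.
      - apply (RInt_correct (V := R_CompleteNormedModule)), ex_RInt_pos; try lra.
        intros; now apply continuous_gig_kernel.
      - exact (is_RInt_power m u u' ltac:(lra) Hu Huu). }
    assert (HlnB : (1 - m) * ln u <= ln (eps * (m - 1))).
    { pose proof (ln_le _ _ (exp_pos _) HBu) as Hln. unfold B in Hln. rewrite ln_exp in Hln.
      apply Rmult_le_compat_neg_l with (r := 1 - m) in Hln; [|lra].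
      replace ((1 - m) * (ln (eps * (m - 1)) / (1 - m))) with (ln (eps * (m - 1))) in Hln
        by (field; lra). exact Hln. }
    pose proof (exp_le_mono _ _ HlnB) as Hexp. rewrite exp_ln in Hexp by nra.
    pose proof (exp_pos ((1 - m) * ln u')).
    apply Rmult_le_reg_l with (m - 1); [lra|].
    replace ((m - 1) * ((exp ((1 - m) * ln u') - exp ((1 - m) * ln u)) / (1 - m)))
      with (exp ((1 - m) * ln u) - exp ((1 - m) * ln u')) by (field; lra).
    nra.
Qed.

Lemma is_RInt_gen_gig_kernel m a b : 1 < m -> 0 < a -> 0 <= b ->
  is_RInt_gen (gig_kernel m a b) (at_right 0) (Rbar_locally p_infty) (gig_integral m a b).
Proof.
  intros Hm Ha Hb. exact (RInt_gen_correct _ (ex_RInt_gen_gig_kernel m a b Hm Ha Hb)).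
Qed.

Lemma exp_sub_1_mvt y : exists c, Rabs c <= Rabs y /\ exp y - 1 = y * exp c.
Proof.
  destruct (Rtotal_order y 0) as [Hy | [-> | Hy]].
  - destruct (MVT_cor2 exp exp y 0 Hy) as [c [Hc1 Hc2]];
      [intros; apply derivable_pt_lim_exp|].
    exists c. rewrite exp_0 in Hc1. rewrite !Rabs_left by lra. lra.
  - exists 0. rewrite exp_0. split; [lra | ring].
  - destruct (MVT_cor2 exp exp 0 y Hy) as [c [Hc1 Hc2]];
      [intros; apply derivable_pt_lim_exp|].
    exists c. rewrite exp_0 in Hc1. rewrite !Rabs_pos_eq by lra. lra.
Qed.

Lemma exp_taylor1_le y : Rabs (exp y - 1 - y) <= y ^ 2 * exp (Rabs y).
Proof.
  destruct (exp_sub_1_mvt y) as [c [Hc Hyc]].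
  destruct (exp_sub_1_mvt c) as [d [Hd Hcd]].
  replace (exp y - 1 - y) with (y * (c * exp d)) by (rewrite <- Hcd; lra).
  rewrite !Rabs_mult, (Rabs_pos_eq (exp d)) by (left; apply exp_pos).
  replace (y ^ 2) with (Rabs y * Rabs y) by (rewrite <- Rabs_mult, Rabs_pos_eq; nra).
  pose proof (exp_le_mono d (Rabs y) ltac:(pose proof (Rle_abs d); lra)).
  pose proof (Rabs_pos y). pose proof (Rabs_pos c). pose proof (exp_pos d).
  rewrite Rmult_assoc. apply Rmult_le_compat_l; [lra|].
  apply Rmult_le_compat; lra.
Qed.

Lemma gig_kernel_taylor_a m a b h s : 0 < s ->
  Rabs (gig_kernel m (a + h) b s - gig_kernel m a b s + h * gig_kernel (m + 1) a b s)
    <= h ^ 2 * gig_kernel (m + 2) (a - Rabs h) b s.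
Proof.
  intros Hs.
  assert (Eh : gig_kernel m (a + h) b s = gig_kernel m a b s * exp (- h / s))
    by (unfold gig_kernel; rewrite <- exp_plus; f_equal; field; lra).
  assert (E2 : gig_kernel (m + 2) (a - Rabs h) b s
               = gig_kernel m a b s / s ^ 2 * exp (Rabs (- h / s))).
  { rewrite Rabs_div, Rabs_Ropp, (Rabs_pos_eq s) by lra.
    replace (m + 2) with (m + 1 + 1) by ring.
    rewrite !gig_kernel_succ by exact Hs.
    replace (gig_kernel m (a - Rabs h) b s) with (gig_kernel m a b s * exp (Rabs h / s))
      by (unfold gig_kernel; rewrite <- exp_plus; f_equal; field; lra).
    field. lra. }
  rewrite Eh, E2, gig_kernel_succ by exact Hs.
  replace (gig_kernel m a b s * exp (- h / s) - gig_kernel m a b s + h * (gig_kernel m a b s / s))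
    with (gig_kernel m a b s * (exp (- h / s) - 1 - (- h / s))) by (field; lra).
  replace (h ^ 2 * (gig_kernel m a b s / s ^ 2 * exp (Rabs (- h / s))))
    with (gig_kernel m a b s * ((- h / s) ^ 2 * exp (Rabs (- h / s)))) by (field; lra).
  rewrite Rabs_mult, (Rabs_pos_eq (gig_kernel m a b s)) by (left; apply gig_kernel_pos).
  apply Rmult_le_compat_l; [left; apply gig_kernel_pos | apply exp_taylor1_le].
Qed.

Lemma gig_integral_taylor_a m a b h : 1 < m -> 0 < a -> 0 <= b -> Rabs h <= a / 2 ->
  Rabs (gig_integral m (a + h) b - gig_integral m a b + h * gig_integral (m + 1) a b)
    <= h ^ 2 * gig_integral (m + 2) (a / 2) b.
Proof.
  intros Hm Ha Hb Hh.
  assert (Hah : 0 < a + h) by (pose proof (Rle_abs (- h)); rewrite Rabs_Ropp in *; lra).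
  apply (RInt_gen_norm (Fa := at_right 0) (Fb := Rbar_locally p_infty)
    (fun s => gig_kernel m (a + h) b s - gig_kernel m a b s + h * gig_kernel (m + 1) a b s)
    (fun s => h ^ 2 * gig_kernel (m + 2) (a / 2) b s)).
  - apply filter_prod_0_infty. simpl. tauto.
  - apply filter_prod_0_infty. intros u u' Hu x Hx; simpl in *.
    eapply Rle_trans; [apply gig_kernel_taylor_a; lra|].
    apply Rmult_le_compat_l; [apply pow2_ge_0|].
    unfold gig_kernel. apply exp_le_mono.
    apply Rplus_le_compat_r, Rplus_le_compat_l, Ropp_le_contravar, Rmult_le_compat_r;
      [left; apply Rinv_0_lt_compat|]; lra.
  - apply (is_RInt_gen_plus (V := R_NormedModule));
      [apply (is_RInt_gen_minus (V := R_NormedModule))|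
       apply (is_RInt_gen_scal (V := R_NormedModule))];
      apply is_RInt_gen_gig_kernel; lra.
  - apply (is_RInt_gen_scal (V := R_NormedModule)), is_RInt_gen_gig_kernel; lra.
Qed.

Lemma is_derive_gig_integral_a m a b : 1 < m -> 0 < a -> 0 <= b ->
  is_derive (fun a' => gig_integral m a' b) a (- gig_integral (m + 1) a b).
Proof.
  intros Hm Ha Hb. apply is_derive_Reals. intros eps Heps.
  set (C := Rabs (gig_integral (m + 2) (a / 2) b) + 1).
  assert (HC : 0 < C) by (pose proof (Rabs_pos (gig_integral (m + 2) (a / 2) b)); unfold C; lra).
  assert (Hd : 0 < Rmin (a / 2) (eps / C)) by (apply Rmin_pos; [lra | apply Rdiv_lt_0_compat; lra]).
  exists (mkposreal _ Hd). intros h Hh0 Hh; simpl in Hh.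
  pose proof (Rmin_l (a / 2) (eps / C)). pose proof (Rmin_r (a / 2) (eps / C)).
  pose proof (gig_integral_taylor_a m a b h Hm Ha Hb ltac:(lra)) as Htay.
  pose proof (Rabs_pos_lt h Hh0).
  assert (HGC : gig_integral (m + 2) (a / 2) b <= C)
    by (pose proof (Rle_abs (gig_integral (m + 2) (a / 2) b)); unfold C; lra).
  replace ((gig_integral m (a + h) b - gig_integral m a b) / h - - gig_integral (m + 1) a b)
    with ((gig_integral m (a + h) b - gig_integral m a b + h * gig_integral (m + 1) a b) / h)
    by (field; exact Hh0).
  rewrite Rabs_div by exact Hh0.
  apply Rlt_div_l; [lra|].
  replace (h ^ 2) with (Rabs h * Rabs h) in Htay by (rewrite <- Rabs_mult, Rabs_pos_eq; nra).
  assert (HhC : Rabs h * C < eps) by (apply (Rlt_div_r _ _ _ HC); lra).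
  nra.
Qed.

Lemma gig_kernel_at_right_0 m a b : 0 < m -> 0 < a -> 0 <= b ->
  filterlim (gig_kernel m a b) (at_right 0) (locally 0).
Proof.
  intros Hm Ha Hb.
  set (C := exp ((m + 1) * ln ((m + 1) / a) - (m + 1))).
  apply (filterlim_le_le (fun _ => 0) _ (fun s => C * s) (Finite 0)).
  - unfold at_right, within. apply filter_forall. intros s Hs.
    split; [left; apply gig_kernel_pos|].
    replace (gig_kernel m a b s) with (s * gig_kernel (m + 1) a b s)
      by (rewrite gig_kernel_succ by exact Hs; field; lra).
    rewrite Rmult_comm. apply Rmult_le_compat_r; [lra|].
    apply gig_kernel_le; lra.
  - apply filterlim_const.
  - apply (filterlim_filter_le_1 (F := locally 0)); [apply filter_le_within|].
    rewrite <- (Rmult_0_r C) at 2.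
    apply (ex_derive_continuous (K := R_AbsRing) (V := R_NormedModule) (fun s => C * s)).
    auto_derive. trivial.
Qed.

Lemma gig_kernel_at_infty m a b : 1 <= m -> 0 <= a -> 0 <= b ->
  filterlim (gig_kernel m a b) (Rbar_locally p_infty) (locally 0).
Proof.
  intros Hm Ha Hb.
  apply (filterlim_le_le (fun _ => 0) _ (fun s => / s) (Finite 0)).
  - exists 1. intros s Hs. split; [left; apply gig_kernel_pos|].
    replace (/ s) with (exp (- ln s)) by (rewrite exp_Ropp, exp_ln; lra).
    eapply Rle_trans; [apply gig_kernel_le_power; lra|].
    apply exp_le_mono.
    assert (0 < ln s) by (rewrite <- ln_1; apply ln_increasing; lra).
    nra.
  - apply filterlim_const.
  - exact (is_lim_inv (fun s => s) p_infty p_infty (is_lim_id p_infty) ltac:(discriminate)).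
Qed.

Lemma gig_integral_recurrence m a b : 1 < m -> 0 < a -> 0 <= b ->
  a * gig_integral (m + 2) a b = m * gig_integral (m + 1) a b + b * gig_integral m a b.
Proof.
  intros Hm Ha Hb.
  set (dE s := - m * gig_kernel (m + 1) a b s + a * gig_kernel (m + 2) a b s
               - b * gig_kernel m a b s).
  assert (HdE : forall s, 0 < s -> is_derive (gig_kernel m a b) s (dE s)).
  { intros s Hs. unfold dE. replace (m + 2) with (m + 1 + 1) by ring.
    rewrite !gig_kernel_succ by exact Hs.
    replace (- m * (gig_kernel m a b s / s) + a * (gig_kernel m a b s / s / s)
             - b * gig_kernel m a b s)
      with (gig_kernel m a b s * (- m / s + a / s ^ 2 - b)) by (field; lra).
    now apply is_derive_gig_kernel. }
  (* the kernel vanishes at both ends, so its derivative integrates to 0 *)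
  assert (Hzero : is_RInt_gen dE (at_right 0) (Rbar_locally p_infty) (0 - 0)).
  { apply (is_RInt_gen_ext (Derive (gig_kernel m a b))).
    { apply filter_prod_0_infty. intros u u' Hu x Hx; simpl in *.
      rewrite Rmin_left, Rmax_right in Hx by lra.
      apply is_derive_unique, HdE. lra. }
    apply is_RInt_gen_Derive.
    - apply filter_prod_0_infty. intros u u' Hu x Hx; simpl in *.
      rewrite Rmin_left in Hx by lra. eexists. apply HdE. lra.
    - apply filter_prod_0_infty. intros u u' Hu x Hx; simpl in *.
      rewrite Rmin_left in Hx by lra.
      apply continuous_ext_loc with dE.
      + apply (filter_imp (fun s => 0 < s)); [|apply locally_gt_0; lra].
        intros s Hs. symmetry. apply is_derive_unique, HdE, Hs.
      + apply (ex_derive_continuous (K := R_AbsRing) (V := R_NormedModule)).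
        unfold dE, gig_kernel. auto_derive. repeat split; lra.
    - apply gig_kernel_at_right_0; lra.
    - apply gig_kernel_at_infty; lra. }
  assert (Hlin : is_RInt_gen dE (at_right 0) (Rbar_locally p_infty)
     (- m * gig_integral (m + 1) a b + a * gig_integral (m + 2) a b - b * gig_integral m a b)).
  { apply (is_RInt_gen_minus (V := R_NormedModule));
      [apply (is_RInt_gen_plus (V := R_NormedModule))|];
      apply (is_RInt_gen_scal (V := R_NormedModule)), is_RInt_gen_gig_kernel; lra. }
  pose proof (is_RInt_gen_unique _ _ Hzero) as U1.
  pose proof (is_RInt_gen_unique _ _ Hlin) as U2.
  rewrite U1 in U2. lra.
Qed.

Section Density.

Variables g mu : R.
Hypothesis hg : 0 < g.

Definition q_const : R := 2 / (Rpower 2 (g / 2) * Gamma_fn (g / 2) * sqrt (2 * PI)).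

Definition q_moment (k : nat) (a : R) : R :=
  gig_integral ((g + 3) / 2 + INR k) a (mu ^ 2 / 2).

Lemma is_derive_q_moment k a : 0 < a -> is_derive (q_moment k) a (- q_moment (S k) a).
Proof.
  intros Ha. unfold q_moment. rewrite S_INR, <- Rplus_assoc.
  apply is_derive_gig_integral_a; [pose proof (pos_INR k) | | pose proof (pow2_ge_0 mu)]; lra.
Qed.

Lemma Derive_q_moment k a : 0 < a -> Derive (q_moment k) a = - q_moment (S k) a.
Proof. intros Ha. now apply is_derive_unique, is_derive_q_moment. Qed.

Lemma q_moment_recurrence a : 0 < a ->
  a * q_moment 2 a = (g + 3) / 2 * q_moment 1 a + mu ^ 2 / 2 * q_moment 0 a.
Proof.
  intros Ha. unfold q_moment. simpl INR. rewrite Rplus_0_r.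
  replace (1 + 1) with 2 by ring.
  apply gig_integral_recurrence; [| | pose proof (pow2_ge_0 mu)]; lra.
Qed.

Lemma p_bessel_fpt_eq r t s : 0 < s ->
  p_bessel g r s * p_fpt mu s t
  = q_const * Rpower r (g - 1) * t * exp (mu * t)
    * gig_kernel ((g + 3) / 2) ((r ^ 2 + t ^ 2) / 2) (mu ^ 2 / 2) s.
Proof.
  intros Hs. unfold p_bessel, p_fpt, q_const, gig_kernel.
  rewrite <- Rpower_mult_distr by lra.
  rewrite sqrt_mult by (try apply pow_le; pose proof PI_RGT_0; lra).
  rewrite <- (Rpower_sqrt (s ^ 3)) by (apply pow_lt; lra).
  set (P2 := Rpower 2 (g / 2)). set (G := Gamma_fn (g / 2)).
  set (sq := sqrt (2 * PI)). set (rg := Rpower r (g - 1)).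
  replace (Rpower s (g / 2)) with (exp (g / 2 * ln s)) by reflexivity.
  replace (Rpower (s ^ 3) (/ 2)) with (exp (3 / 2 * ln s))
    by (unfold Rpower; rewrite ln_pow by lra; simpl INR; f_equal; field).
  transitivity (2 * / P2 * / G * / sq * rg * t * exp (- r ^ 2 / (2 * s) + - (g / 2 * ln s)
     + - (t - mu * s) ^ 2 / (2 * s) + - (3 / 2 * ln s))).
  { rewrite !exp_plus, !exp_Ropp. unfold Rdiv. rewrite !Rinv_mult. ring. }
  transitivity (2 * / P2 * / G * / sq * rg * t * exp (mu * t + (- ((g + 3) / 2) * ln s
     - (r ^ 2 + t ^ 2) / 2 / s - mu ^ 2 / 2 * s))).
  { do 2 f_equal. field. lra. }
  replace (2 / (P2 * G * sq)) with (2 * / P2 * / G * / sq)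
    by (unfold Rdiv; rewrite !Rinv_mult; ring).
  rewrite exp_plus. ring.
Qed.

Lemma q_mu_eq r t : 0 < r ->
  q_mu g mu r t = q_const * Rpower r (g - 1) * t * exp (mu * t) * q_moment 0 ((r ^ 2 + t ^ 2) / 2).
Proof.
  intros Hr. unfold q_mu, q_moment. simpl INR. rewrite Rplus_0_r.
  apply is_RInt_gen_unique.
  apply (is_RInt_gen_ext (fun s => scal (q_const * Rpower r (g - 1) * t * exp (mu * t))
     (gig_kernel ((g + 3) / 2) ((r ^ 2 + t ^ 2) / 2) (mu ^ 2 / 2) s))).
  - apply filter_prod_0_infty. intros u u' Hu x Hx; simpl in *.
    rewrite Rmin_left in Hx by lra. symmetry. apply p_bessel_fpt_eq. lra.
  - apply (is_RInt_gen_scal (V := R_NormedModule)), is_RInt_gen_gig_kernel;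
      [lra | nra | pose proof (pow2_ge_0 mu); lra].
Qed.

Local Notation Q k r t := (q_moment k ((r ^ 2 + t ^ 2) / 2)).

Definition q_t (r t : R) : R := q_const * Rpower r (g - 1) * exp (mu * t) *
  ((1 + mu * t) * Q 0 r t - t ^ 2 * Q 1 r t).

Definition q_tt (r t : R) : R := q_const * Rpower r (g - 1) * exp (mu * t) *
  (mu * ((1 + mu * t) * Q 0 r t - t ^ 2 * Q 1 r t) + mu * Q 0 r t
   - (3 + mu * t) * t * Q 1 r t + t ^ 3 * Q 2 r t).

Definition q_r (r t : R) : R := q_const * t * exp (mu * t) * Rpower r (g - 1) *
  ((g - 1) / r * Q 0 r t - r * Q 1 r t).

Definition q_rr (r t : R) : R := q_const * t * exp (mu * t) * Rpower r (g - 1) *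
  ((g - 1) * (g - 2) / r ^ 2 * Q 0 r t - (2 * g - 1) * Q 1 r t + r ^ 2 * Q 2 r t).

Definition q_div_r_r (r t : R) : R := q_const * t * exp (mu * t) * Rpower r (g - 1) *
  ((g - 2) / r ^ 2 * Q 0 r t - Q 1 r t).

Lemma ex_derive_q_moment k a : 0 < a -> ex_derive (q_moment k) a.
Proof. intros Ha. eexists. now apply is_derive_q_moment. Qed.

(* the form in which auto_derive leaves the argument of q_moment *)
Lemma auto_derive_half_sum_sq r t : (r * (r * 1) + t * (t * 1)) * / 2 = (r ^ 2 + t ^ 2) / 2.
Proof. field. Qed.

Lemma is_derive_q_mu_t r t : 0 < r -> is_derive (fun t' => q_mu g mu r t') t (q_t r t).
Proof.
  intros Hr.
  apply (is_derive_ext (fun t' => q_const * Rpower r (g - 1) * t' * exp (mu * t') * Q 0 r t')).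
  { intros t'. symmetry. now apply q_mu_eq. }
  auto_derive; [apply ex_derive_q_moment; nra|].
  rewrite Derive_q_moment, auto_derive_half_sum_sq by nra. unfold q_t. field.
Qed.

Lemma is_derive_q_t r t : 0 < r -> is_derive (fun t' => q_t r t') t (q_tt r t).
Proof.
  intros Hr. unfold q_t. auto_derive; [repeat split; apply ex_derive_q_moment; nra|].
  rewrite !Derive_q_moment, !auto_derive_half_sum_sq by nra. unfold q_tt. field.
Qed.

Lemma is_derive_q_mu_r r t : 0 < r -> is_derive (fun r' => q_mu g mu r' t) r (q_r r t).
Proof.
  intros Hr.
  apply (is_derive_ext_loc (fun r' => q_const * Rpower r' (g - 1) * t * exp (mu * t) * Q 0 r' t)).
  { apply (filter_imp (fun r' => 0 < r')); [|now apply locally_gt_0].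
    intros r' Hr'. symmetry. now apply q_mu_eq. }
  unfold Rpower. auto_derive; [repeat split; try lra; apply ex_derive_q_moment; nra|].
  rewrite Derive_q_moment, auto_derive_half_sum_sq by nra. unfold q_r, Rpower. field. lra.
Qed.

Lemma is_derive_q_r r t : 0 < r -> is_derive (fun r' => q_r r' t) r (q_rr r t).
Proof.
  intros Hr. unfold q_r, Rpower.
  auto_derive; [repeat split; try lra; apply ex_derive_q_moment; nra|].
  rewrite !Derive_q_moment, !auto_derive_half_sum_sq by nra. unfold q_rr, Rpower. field. lra.
Qed.

Lemma is_derive_q_mu_div_r r t : 0 < r ->
  is_derive (fun r' => q_mu g mu r' t / r') r (q_div_r_r r t).
Proof.
  intros Hr.
  apply (is_derive_ext_loc (fun r' => q_const * Rpower r' (g - 1) * t * exp (mu * t) * Q 0 r' t / r')).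
  { apply (filter_imp (fun r' => 0 < r')); [|now apply locally_gt_0].
    intros r' Hr'. now rewrite q_mu_eq. }
  unfold Rpower. auto_derive; [repeat split; try lra; apply ex_derive_q_moment; nra|].
  rewrite Derive_q_moment, auto_derive_half_sum_sq by nra. unfold q_div_r_r, Rpower. field. lra.
Qed.

Lemma q_closed_form_pde r t : 0 < r ->
  2 * mu * q_t r t - q_tt r t = q_rr r t - (g - 1) * q_div_r_r r t.
Proof.
  intros Hr. assert (Ha : 0 < (r ^ 2 + t ^ 2) / 2) by nra.
  assert (HQ2 : Q 2 r t = ((g + 3) / 2 * Q 1 r t + mu ^ 2 / 2 * Q 0 r t) / ((r ^ 2 + t ^ 2) / 2)).
  { rewrite <- q_moment_recurrence by exact Ha. field. lra. }
  unfold q_t, q_tt, q_rr, q_div_r_r. rewrite HQ2. field. lra.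
Qed.

End Density.

Theorem mainTheorem11 (g mu r t : R) (hg : 0 < g) (hmu : 0 <= mu)
  (hr : 0 < r) (ht : 0 < t) :
  ex_derive (fun t' => q_mu g mu r t') t /\
  ex_derive (fun t' => Derive (fun t'' => q_mu g mu r t'') t') t /\
  ex_derive (fun r' => q_mu g mu r' t) r /\
  ex_derive (fun r' => Derive (fun r'' => q_mu g mu r'' t) r') r /\
  ex_derive (fun r' => q_mu g mu r' t / r') r /\
  2 * mu * Derive (fun t' => q_mu g mu r t') t
    - Derive_n (fun t' => q_mu g mu r t') 2 t
  = Derive_n (fun r' => q_mu g mu r' t) 2 r
    - (g - 1) * Derive (fun r' => q_mu g mu r' t / r') r.
Proof.
  pose proof (is_derive_q_mu_t g mu hg r t hr) as Hq_t.
  pose proof (is_derive_q_mu_r g mu hg r t hr) as Hq_r.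
  pose proof (is_derive_q_mu_div_r g mu hg r t hr) as Hq_div.
  destruct (is_derive_2 (fun t' => q_mu g mu r t') (q_t g mu r) t (q_tt g mu r t))
    as [Hex_tt Hq_tt].
  { apply filter_forall. intros t'. now apply is_derive_q_mu_t. }
  { now apply is_derive_q_t. }
  destruct (is_derive_2 (fun r' => q_mu g mu r' t) (fun r' => q_r g mu r' t) r (q_rr g mu r t))
    as [Hex_rr Hq_rr].
  { apply (filter_imp (fun r' => 0 < r')); [|now apply locally_gt_0].
    intros r' Hr'. now apply is_derive_q_mu_r. }
  { now apply is_derive_q_r. }
  repeat split; try assumption; try (eexists; eassumption).
  replace (Derive (fun t' => q_mu g mu r t') t) with (q_t g mu r t)
    by (symmetry; now apply is_derive_unique).
  replace (Derive (fun r' => q_mu g mu r' t / r') r) with (q_div_r_r g mu r t)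
    by (symmetry; now apply is_derive_unique).
  rewrite Hq_tt, Hq_rr. now apply q_closed_form_pde.
Qed.
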